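(* Let $\alpha,\beta\in\Bbbk^*$ be not roots of unity and $r,i\in\mathbb{Z}$ with $\alpha^w=\beta^n$. Then the Nichols algebra $\mathcal{B}(V(\alpha,\beta,x^rg^i))$ of the Yetter-Drinfeld module $V(\alpha,\beta,x^rg^i)$ over $B(n,w,\gamma)$ is infinite-dimensional.
   Context: $\Bbbk$ is an algebraically closed field of characteristic $0$; $n,w$ positive integers, $\gamma$ a primitive $n$-th root of unity. $H=B(n,w,\gamma)$ is the Hopf algebra generated by $x^{\pm1},g,y$ with relations $xx^{-1}=x^{-1}x=1$, $xg=gx$, $xy=yx$, $yg=\gamma gy$, $y^n=1-x^w=1-g^n$, with $\Delta(x)=x\otimes x$, $\Delta(g)=g\otimes g$, $\Delta(y)=y\otimes g+1\otimes y$, $\varepsilon(x)=\varepsilon(g)=1$, $\varepsilon(y)=0$, $S(x)=x^{-1}$, $S(g)=g^{-1}$, $S(y)=-yg^{-1}$. Yetter-Drinfeld modules are left-left: $\delta(h\cdot v)=h_{(1)}v_{(-1)}S(h_{(3)})\otimes h_{(2)}\cdot v_{(0)}$. The Nichols algebra of a Yetter-Drinfeld module $U$ is $\mathcal{B}(U)=T(U)/\bigoplus_{k\ge2}\ker(\mathfrak{S}_k)$, where $\mathfrak{S}_k$ is the braided symmetrizer on $U^{\otimes k}$ for the braiding $c(u\otimes u')=u_{(-1)}\cdot u'\otimes u_{(0)}$. Define $c_\beta^{r,i}(k,l)\in H$ ($0\le l\le k$) by $c_\beta^{r,i}(0,0)=x^rg^i$ and, for $k\ge0$: $c_\beta^{r,i}(k+1,0)=c_\beta^{r,i}(k,0)S(y)+\beta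 yc_\beta^{r,i}(k,0)S(g)$; for $0<l<k+1$, $c_\beta^{r,i}(k+1,l)=c_\beta^{r,i}(k,l)S(y)+\beta\gamma^{-l}yc_\beta^{r,i}(k,l)S(g)+c_\beta^{r,i}(k,l-1)S(g)$; $c_\beta^{r,i}(k+1,k+1)=c_\beta^{r,i}(k,k)S(g)$. When $\beta^n\ne1$ (as here), $V(\alpha,\beta,x^rg^i)$ is the Yetter-Drinfeld module over $H$ with basis $v_0,\dots,v_{n-1}$ and $x\cdot v_k=\alpha v_k$, $g\cdot v_k=\beta\gamma^{-k}v_k$, $y\cdot v_k=v_{k+1}$ ($k<n-1$), $y\cdot v_{n-1}=(1-\beta^n)v_0$, $\delta(v_k)=\sum_{l=0}^kc_\beta^{r,i}(k,l)\otimes v_l$. *)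

From HB Require Import structures.
From mathcomp Require Import all_boot all_order all_algebra.
Set Implicit Arguments. Unset Strict Implicit. Unset Printing Implicit Defensive.
Import GRing.Theory Num.Theory.
Local Open Scope ring_scope.

(* The Yetter-Drinfeld module V(alpha,beta,x^r g^i) over H = B(n,w,gamma),
   with basis v_0,...,v_(n-1).  Everything the Nichols algebra depends on is
   the braiding c(u (x) u') = u_(-1).u' (x) u_(0); this only involves the
   action of the elements c_beta^{r,i}(k,l) of H on V, i.e. their images
   under the representation rho : H -> End(V).  Since rho is an algebra map,
   rho(c(k,l)) satisfies the same recursion as c(k,l), with
   rho(x^r g^i), rho(y), rho(S y) = -rho(y) rho(g)^-1, rho(S g) = rho(g)^-1.

   Endomorphisms of V are encoded as coefficient functions
   A m b = coefficient of v_m in A v_b  (indices m, b < n). *)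

Section YDModule.
Variables (K : fieldType) (n : nat) (gam alpha beta : K) (r i : int).

Definition vmat := nat -> nat -> K.
Definition vzero : vmat := fun _ _ => 0.
Definition vadd (A B : vmat) : vmat := fun m b => A m b + B m b.
Definition vscale (c : K) (A : vmat) : vmat := fun m b => c * A m b.
Definition vmul (A B : vmat) : vmat := fun m b => \sum_(j < n) A m j * B j b.

Definition rhoG : vmat := fun m b => (m == b)%:R * (beta / gam ^+ b).
Definition rhoY : vmat := fun m b =>
  if (b.+1 < n)%N then (m == b.+1)%:R
  else if (b == n.-1) && (m == 0%N) then 1 - beta ^+ n else 0.
Definition rhoSG : vmat := fun m b => (m == b)%:R * (gam ^+ b / beta).
Definition rhoSY : vmat := vscale (-1) (vmul rhoY rhoSG).
(* x^r g^i, with x . v_k = alpha v_k *)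
Definition rhoxg : vmat :=
  fun m b => (m == b)%:R * (alpha ^ r * (beta / gam ^+ b) ^ i).

(* rho(c_beta^{r,i}(k,l)); it is 0 for l > k (c(k,l) is only defined for
   l <= k, and the recursion below then reproduces exactly the three cases
   of the paper). *)
Fixpoint cmat (k : nat) : nat -> vmat :=
  match k with
  | 0%N => fun l => if l == 0%N then rhoxg else vzero
  | k'.+1 => fun l =>
      vadd (vmul (cmat k' l) rhoSY)
        (vadd (vscale (beta / gam ^+ l) (vmul rhoY (vmul (cmat k' l) rhoSG)))
              (if l is l'.+1 then vmul (cmat k' l') rhoSG else vzero))
  end.

(* delta(v_a) = sum_(l<=a) c(a,l) (x) v_l, hence
   c(v_a (x) v_b) = sum_l rho(c(a,l)) v_b (x) v_l;
   braid m l a b = coefficient of v_m (x) v_l in c(v_a (x) v_b). *)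
Definition braid (m l a b : nat) : K := cmat a l m b.

Definition tens (k : nat) := (k.-tuple 'I_n)%type.
Definition tcoord k (t : tens k) (j : nat) : nat := nth 0%N [seq val x | x <- t] j.

(* Endomorphisms of V^(x)k: A s t = coefficient of e_s in A e_t. *)
Definition top (k : nat) := tens k -> tens k -> K.
Definition tid k : top k := fun s t => (s == t)%:R.
Definition tadd k (A B : top k) : top k := fun s t => A s t + B s t.
Definition tmul k (A B : top k) : top k := fun s t => \sum_(u : tens k) A s u * B u t.

(* c_j = id^(x)j (x) c (x) id^(x)(k-j-2), acting on factors j, j+1
   (0-based), defined for j+1 < k. *)
Definition tbraid k (j : nat) : top k := fun s t =>
  if (j.+1 < k)%N then
    if [forall p : 'I_k, ((p : nat) != j) && ((p : nat) != j.+1) ==> (tnth s p == tnth t p)]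
    then braid (tcoord s j) (tcoord s j.+1) (tcoord t j) (tcoord t j.+1)
    else 0
  else 0.

(* chain k j = c_(k-2) c_(k-3) ... c_(k-1-j) (0-based), i.e.
   c_(k-1) ... c_(k-j) in 1-based numbering. *)
Fixpoint chain k (j : nat) : top k :=
  match j with
  | 0%N => @tid k
  | j'.+1 => tmul (@chain k j') (@tbraid k (k - 2 - j'))
  end.

(* T_k = id + c_(k-1) + c_(k-1)c_(k-2) + ... + c_(k-1)...c_1 (1-based) *)
Definition Tk k : top k := fun s t => \sum_(j < k) @chain k j s t.

(* A (x) id : V^(x)k -> V^(x)k, extended to V^(x)(k+1) *)
Definition tinit k (t : tens k.+1) : tens k :=
  [tuple tnth t (widen_ord (leqnSn k) p) | p < k].
Definition lift_left k (A : top k) : top k.+1 := fun s t =>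
  A (tinit s) (tinit t) * (tnth s ord_max == tnth t ord_max)%:R.

(* Braided symmetrizer: S_0 = id, S_(k+1) = (S_k (x) id) T_(k+1);
   this equals sum_(sigma in S_k) M(sigma), M the Matsumoto section. *)
Fixpoint sym (k : nat) : top k :=
  match k return top k with
  | 0%N => @tid 0
  | k'.+1 => tmul (lift_left (@sym k')) (@Tk k'.+1)
  end.

Definition sym_mx k : 'M[K]_#|{: tens k}| :=
  \matrix_(a, b) @sym k (enum_val a) (enum_val b).

(* dim B^k(V) = dim V^(x)k / ker S_k = rank S_k *)
Definition nichols_deg_dim (k : nat) : nat := \rank (sym_mx k).

(* B(V) = (+)_k V^(x)k / ker S_k is infinite-dimensional: the total
   dimension is unbounded. *)
Definition nichols_infinite_dim : Prop :=
  forall N : nat, exists D : nat, (N <= \sum_(k < D) nichols_deg_dim k)%N.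

End YDModule.

From Pilot Require Import Defs.
From mathcomp Require Import all_boot all_order all_algebra.
From mathcomp Require Import zify ring.
Set Implicit Arguments. Unset Strict Implicit.
Import GRing.Theory.
Local Open Scope ring_scope.

(* Order the basis tensors v_(t_1) (x) ... (x) v_(t_k) of V^(x)k by their weight
   t_1 + ... + t_k.  The braiding never raises the weight, since c(k,l) maps v_b
   into the span of the v_m with m + l <= k + b; hence the braided symmetrizer
   S_k is triangular.  For c = 0 or c = n-1 the tensor v_c^(x)k is the only
   basis tensor of its weight, so the corresponding diagonal entry of S_k is
   prod_(j<k) (1 + q + ... + q^j), with q the scalar by which the braiding acts
   on v_c (x) v_c.  One computes q^n = alpha^(rn + wi - wc); since alpha is not
   a root of unity and the two exponents for c = 0 and c = n-1 differ by
   w(n-1), for one of them q is 1 or not a root of unity.  In characteristic 0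
   all these q-integers are then nonzero, so no B^k(V) vanishes. *)

Lemma sumr_neq0 (V : nmodType) (I : finType) (F : I -> V) :
  \sum_i F i != 0 -> exists i, F i != 0.
Proof.
move=> sum_neq0; suff /existsP[j Fj] : [exists j, F j != 0] by exists j.
by apply: contraNT sum_neq0 => /existsPn F0; rewrite big1 // => j _; apply/eqP/negPn.
Qed.

Lemma addr_neq0 (V : nmodType) (x y : V) : x + y != 0 -> (x != 0) || (y != 0).
Proof.
by apply: contraNT; rewrite negb_or => /andP[/negPn/eqP-> /negPn/eqP->]; rewrite addr0.
Qed.

Lemma natr_bool_neq0 (R : nzSemiRingType) (b : bool) : (b%:R : R) != 0 -> b.
Proof. by case: b; rewrite ?eqxx. Qed.

Lemma exprz_eq1 (R : unitRingType) (a : R) (e : int) :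
  (forall m, (0 < m)%N -> a ^+ m != 1) -> (a ^ e == 1) = (e == 0).
Proof.
move=> a_nru; case: e => [[|m]|m]; rewrite ?expr0z ?eqxx //.
  by rewrite -exprnP (negPf (a_nru _ _)).
by rewrite /exprz invr_eq1 (negPf (a_nru _ _)).
Qed.

Lemma exprz_root_of_unity_eq1 (R : unitRingType) (a q : R) (n : nat) (e : int) :
  (forall m, (0 < m)%N -> a ^+ m != 1) -> q ^+ n = a ^ e -> n = 1%N \/ e != 0 ->
  forall m, (0 < m)%N -> q ^+ m = 1 -> q = 1.
Proof.
move=> a_nru qn ne m m_gt0 qm.
have e0 : e = 0.
  have : a ^ (e * m%:Z) == 1 by rewrite -exprz_exp -qn -exprnP exprAC qm expr1n.
  by rewrite exprz_eq1 // mulf_eq0 eqz_nat (gtn_eqF m_gt0) orbF => /eqP.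
by case: ne => [n1|]; [rewrite -[q]expr1 -n1 qn e0 | rewrite e0 eqxx].
Qed.

Lemma sum_exprs_neq0 (R : idomainType) (q : R) j : [pchar R] =i pred0 ->
  (forall m, (0 < m)%N -> q ^+ m = 1 -> q = 1) -> \sum_(l < j.+1) q ^+ l != 0.
Proof.
move=> /pcharf0P char0 q_trivial; have [->|neq_q1] := eqVneq q 1.
  by under eq_bigr do rewrite expr1n; rewrite sumr_const card_ord char0.
apply: contra neq_q1 => /eqP sum0; apply/eqP/(q_trivial j.+1) => //.
by apply/eqP; rewrite -subr_eq0 subrX1 sum0 mulr0.
Qed.

Section Braiding.
Variables (K : fieldType) (n : nat) (gam alpha beta : K) (r i : int).

Local Notation cm := (cmat n gam alpha beta r i).

Lemma rhoY_support m j : rhoY n beta m j != 0 -> (m <= j.+1)%N.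
Proof.
rewrite /rhoY; case: ifP => _; first by move/natr_bool_neq0/eqP->.
by case: ifP => [/andP[_ /eqP->] //|]; rewrite eqxx.
Qed.

Lemma rhoSG_support j b : rhoSG gam beta j b != 0 -> j = b.
Proof. by rewrite mulf_eq0 negb_or => /andP[/natr_bool_neq0/eqP]. Qed.

Lemma rhoSY_support j b : rhoSY n gam beta j b != 0 -> (j <= b.+1)%N.
Proof.
rewrite mulf_eq0 negb_or => /andP[_ /sumr_neq0[x]].
by rewrite mulf_eq0 negb_or => /andP[/rhoY_support + /rhoSG_support <-].
Qed.

Lemma cmat_support k l m b : cm k l m b != 0 -> ((m + l <= k + b) && (l <= k))%N.
Proof.
elim: k l m b => [|k IH] l m b /=.
  case: ifP => [/eqP->|_]; last by rewrite /vzero eqxx.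
  by rewrite /rhoxg mulf_eq0 negb_or => /andP[/natr_bool_neq0/eqP-> _]; lia.
case/addr_neq0/orP => [|/addr_neq0/orP[|]].
- case/sumr_neq0 => j; rewrite mulf_eq0 negb_or => /andP[/IH + /rhoSY_support]; lia.
- rewrite mulf_eq0 negb_or => /andP[_ /sumr_neq0[j]].
  rewrite mulf_eq0 negb_or => /andP[/rhoY_support le_mj /sumr_neq0[x]].
  by rewrite mulf_eq0 negb_or => /andP[/IH + /rhoSG_support]; lia.
- case: l => [|l]; first by rewrite eqxx.
  case/sumr_neq0 => j; rewrite mulf_eq0 negb_or => /andP[/IH + /rhoSG_support]; lia.
Qed.

Lemma vmul_rhoSG (A : vmat K) m b : (b < n)%N ->
  vmul n A (rhoSG gam beta) m b = A m b * (gam ^+ b / beta).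
Proof.
move=> lt_bn; rewrite /vmul (bigD1 (Ordinal lt_bn)) //= big1 ?addr0.
  by rewrite /rhoSG eqxx mul1r.
move=> j /eqP neq_jb; rewrite /rhoSG; case: eqP => [eq_jb|]; last by rewrite mul0r mulr0.
by case: neq_jb; apply: val_inj.
Qed.

Lemma cmat_diag k m b : (b < n)%N ->
  cm k k m b = (m == b)%:R * (alpha ^ r * (beta / gam ^+ b) ^ i) * (gam ^+ b / beta) ^+ k.
Proof.
move=> lt_bn; elim: k m => [|k IH] m /=; first by rewrite expr0 mulr1.
have cm0 m' b' : cm k k.+1 m' b' = 0.
  by apply/eqP; apply: contraTT isT => /cmat_support; lia.
rewrite /vadd /vscale vmul_rhoSG // IH /vmul big1 => [|j _]; last by rewrite cm0 mul0r.
rewrite big1 => [|j _]; last by rewrite big1 ?mulr0 // => x _; rewrite cm0 mul0r.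
by rewrite mulr0 !add0r exprSr !mulrA.
Qed.

Lemma braid_self_expn (w c : nat) :
  (c < n)%N -> gam ^+ n = 1 -> alpha != 0 -> alpha ^+ w = beta ^+ n ->
  braid n gam alpha beta r i c c c c ^+ n = alpha ^ (r * n%:Z + w%:Z * i - w%:Z * c%:Z).
Proof.
move=> lt_cn gn1 a_neq0 aw.
rewrite /braid cmat_diag // eqxx mul1r -[gam ^+ c / beta]invf_div.
set u := beta / gam ^+ c.
have un : u ^+ n = alpha ^+ w by rewrite expr_div_n exprAC gn1 expr1n divr1 aw.
have E1 : (alpha ^ r) ^+ n = alpha ^ (r * n%:Z) by rewrite exprnP exprz_exp.
have E2 : (u ^ i) ^+ n = alpha ^ (w%:Z * i) by rewrite exprnP exprzAC -exprnP un exprnP exprz_exp.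
have E3 : (u^-1 ^+ c) ^+ n = alpha ^ (- (w%:Z * c%:Z)).
  by rewrite -exprM mulnC exprM exprVn un exprVn -exprM -exprnN.
by rewrite !exprMn E1 E2 E3 -!expfzDr.
Qed.

End Braiding.

Section Weight.
Variables (K : fieldType) (n : nat).

Definition tweight k (t : tens n k) : nat := (\sum_(p < k) tnth t p)%N.

Definition wt_triangular k (A : top K n k) :=
  forall s t, A s t != 0 -> (tweight s <= tweight t)%N.

Definition wt_isolated k (t : tens n k) := forall u, tweight u = tweight t -> u = t.

Lemma tcoordE k (t : tens n k) (p : 'I_k) : tcoord t p = tnth t p.
Proof. by rewrite /tcoord (nth_map (tnth t p)) ?size_tuple // -tnth_nth. Qed.

Lemma tweight_tinit k (t : tens n k.+1) : tweight t = (tweight (tinit t) + tnth t ord_max)%N.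
Proof.
rewrite /tweight big_ord_recr; congr (_ + _)%N.
by apply: eq_bigr => p _; rewrite tnth_mktuple.
Qed.

Lemma tweight_pair k (t : tens n k) j : (j.+1 < k)%N ->
  tweight t = (tcoord t j + tcoord t j.+1 +
    \sum_(p < k | ((p : nat) != j) && ((p : nat) != j.+1)) tnth t p)%N.
Proof.
move=> lt_j1k; pose pj : 'I_k := Ordinal (ltnW lt_j1k); pose pj1 : 'I_k := Ordinal lt_j1k.
rewrite /tweight (bigD1 pj) //= (bigD1 pj1) /=; last by rewrite -val_eqE /= (gtn_eqF (ltnSn j)).
by rewrite (tcoordE t pj) (tcoordE t pj1) addnA.
Qed.

Lemma tweight_le_eq k (u t : tens n k) :
  (forall p, tnth u p <= tnth t p)%N -> tweight u = tweight t -> u = t.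
Proof.
move=> le_ut eq_wt; have /leqif_sum[_] := fun p (_ : true) => leqif_eq (le_ut p).
rewrite -/(tweight u) -/(tweight t) eq_wt eqxx => /esym/forallP eq_ut.
by apply: eq_from_tnth => p; apply/val_inj/eqP/eq_ut.
Qed.

Lemma nseq_wt_isolated k (c : 'I_n) : (c == 0%N :> nat) || (c == n.-1 :> nat) ->
  wt_isolated [tuple of nseq k c].
Proof.
case/orP => /eqP c_ext u eq_wt.
  by apply/esym/tweight_le_eq => // p; rewrite tnth_nseq c_ext.
by apply: tweight_le_eq => // p; rewrite tnth_nseq c_ext -ltnS (ltn_predK (ltn_ord c)).
Qed.

Lemma wt_triangular_tid k : wt_triangular (@tid K n k).
Proof. by move=> s t /natr_bool_neq0/eqP->. Qed.

Lemma wt_triangular_tmul k (A B : top K n k) :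
  wt_triangular A -> wt_triangular B -> wt_triangular (tmul A B).
Proof.
move=> trA trB s t /sumr_neq0[u]; rewrite mulf_eq0 negb_or => /andP[/trA le_su /trB].
exact: leq_trans.
Qed.

Lemma wt_triangular_lift_left k (A : top K n k) :
  wt_triangular A -> wt_triangular (lift_left A).
Proof.
move=> trA s t; rewrite mulf_eq0 negb_or => /andP[/trA le_st /natr_bool_neq0/eqP eq_st].
by rewrite (tweight_tinit s) (tweight_tinit t) eq_st leq_add2r.
Qed.

Lemma tmul_isolated k (A B : top K n k) t :
  wt_triangular A -> wt_triangular B -> wt_isolated t -> tmul A B t t = A t t * B t t.
Proof.
move=> trA trB iso_t; rewrite /tmul (bigD1 t) //= big1 ?addr0 // => u neq_ut.
have [->|/trA le_tu] := eqVneq (A t u) 0; first by rewrite mul0r.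
have [->|/trB le_ut] := eqVneq (B u t) 0; first by rewrite mulr0.
by case/eqP: neq_ut; apply: iso_t; apply/eqP; rewrite eqn_leq le_ut.
Qed.

End Weight.

Section Symmetrizer.
Variables (K : fieldType) (n : nat) (gam alpha beta : K) (r i : int).

Local Notation tbraid k := (@Defs.tbraid K n gam alpha beta r i k).
Local Notation chain k := (@Defs.chain K n gam alpha beta r i k).
Local Notation Tk k := (@Defs.Tk K n gam alpha beta r i k).
Local Notation sym k := (@Defs.sym K n gam alpha beta r i k).

Lemma wt_triangular_tbraid k j : wt_triangular (tbraid k j).
Proof.
move=> s t; rewrite /Defs.tbraid; case: ifP => lt_j1k; last by rewrite eqxx.
case: ifP => /forallP eq_st; last by rewrite eqxx.
rewrite /braid => /cmat_support /andP[le_st _].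
rewrite (tweight_pair s lt_j1k) (tweight_pair t lt_j1k) leq_add //.
by apply/eq_leq/eq_bigr => p /(implyP (eq_st p))/eqP->.
Qed.

Lemma wt_triangular_chain k j : wt_triangular (chain k j).
Proof.
elim: j => [|j IH] /=; first exact: wt_triangular_tid.
exact/wt_triangular_tmul/wt_triangular_tbraid.
Qed.

Lemma wt_triangular_Tk k : wt_triangular (Tk k).
Proof. by move=> s t /sumr_neq0[j /wt_triangular_chain]. Qed.

Lemma wt_triangular_sym k : wt_triangular (sym k).
Proof.
elim: k => [|k IH] /=; first exact: wt_triangular_tid.
exact/wt_triangular_tmul/wt_triangular_Tk/wt_triangular_lift_left.
Qed.

Variable c : 'I_n.
Hypothesis c_isolated : forall k, wt_isolated [tuple of nseq k c].
Local Notation vc k := [tuple of nseq k c].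
Let q := braid n gam alpha beta r i c c c c.

Lemma chain_nseq k j : (j < k)%N -> chain k j (vc k) (vc k) = q ^+ j.
Proof.
elim: j => [|j IH] lt_jk /=; first by rewrite /tid eqxx.
rewrite tmul_isolated //; [|exact: wt_triangular_chain|exact: wt_triangular_tbraid].
rewrite IH 1?ltnW // exprSr; congr (_ * _).
rewrite /Defs.tbraid ifT; last lia.
rewrite ifT; last by apply/forallP => p; rewrite !tnth_nseq eqxx implybT.
by rewrite /tcoord map_nseq !nth_nseq !ifT //; lia.
Qed.

Lemma sym_nseq k : sym k (vc k) (vc k) = \prod_(j < k) \sum_(l < j.+1) q ^+ l.
Proof.
elim: k => [|k IH] /=; first by rewrite big_ord0 /tid eqxx.
rewrite tmul_isolated //; last first.
- exact: wt_triangular_Tk.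
- exact/wt_triangular_lift_left/wt_triangular_sym.
rewrite big_ord_recr /=; congr (_ * _).
  have tinit_vc : tinit (vc k.+1) = vc k.
    by apply: eq_from_tnth => p; rewrite tnth_mktuple !tnth_nseq.
  by rewrite /lift_left tinit_vc IH eqxx mulr1.
by apply: eq_bigr => j _; rewrite chain_nseq.
Qed.

Lemma nichols_deg_dim_gt0 k : (forall j, \sum_(l < j.+1) q ^+ l != 0) ->
  (0 < nichols_deg_dim n gam alpha beta r i k)%N.
Proof.
move=> qint_neq0; rewrite lt0n mxrank_eq0; apply/eqP.
move/matrixP/(_ (enum_rank (vc k)) (enum_rank (vc k))).
rewrite !mxE enum_rankK sym_nseq => /eqP; apply/negP.
by rewrite prodf_seq_neq0; apply/allP => j _; apply: qint_neq0.
Qed.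

End Symmetrizer.

Lemma nichols_infinite_dim_of_deg_gt0 (K : fieldType) n (gam alpha beta : K) r i :
  (forall k, 0 < nichols_deg_dim n gam alpha beta r i k)%N ->
  nichols_infinite_dim n gam alpha beta r i.
Proof.
move=> dim_gt0 N; exists N; rewrite -{1}(card_ord N) -sum1_card.
by apply: leq_sum => k _; apply: dim_gt0.
Qed.

Theorem lemma5p9 (K : closedFieldType) (n w : nat) (gam alpha beta : K) (r i : int) :
  [pchar K] =i pred0 ->
  (0 < n)%N -> (0 < w)%N ->
  n.-primitive_root gam ->
  alpha != 0 -> beta != 0 ->
  (forall m : nat, (0 < m)%N -> alpha ^+ m != 1) ->
  (forall m : nat, (0 < m)%N -> beta ^+ m != 1) ->
  alpha ^+ w = beta ^+ n ->
  nichols_infinite_dim n gam alpha beta r i.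
Proof.
move=> char0 n_gt0 w_gt0 gam_prim alpha_neq0 _ alpha_nru _ alpha_w.
pose e (c : nat) : int := r * n%:Z + w%:Z * i - w%:Z * c%:Z.
have [c c_extremal c_exp] : exists2 c : 'I_n,
    (c == 0%N :> nat) || (c == n.-1 :> nat) & n = 1%N \/ e c != 0.
  have [n1|n_neq1] := eqVneq n 1%N; first by exists (Ordinal n_gt0); [|left].
  have [e0|e0_neq0] := eqVneq (e 0%N) 0; last by exists (Ordinal n_gt0); [|right].
  have lt_pred_n : (n.-1 < n)%N by rewrite ltn_predL.
  exists (Ordinal lt_pred_n); rewrite ?eqxx ?orbT //; right.
  have -> : e n.-1 = e 0%N - (w * n.-1)%N%:Z by rewrite /e PoszM; ring.
  by rewrite e0 sub0r oppr_eq0 eqz_nat muln_eq0 negb_or -!lt0n w_gt0; lia.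
apply: nichols_infinite_dim_of_deg_gt0 => k.
apply: (nichols_deg_dim_gt0 (c := c)) => [k'|j]; first exact: nseq_wt_isolated.
apply: sum_exprs_neq0 char0 _; apply: exprz_root_of_unity_eq1 alpha_nru _ c_exp.
exact: braid_self_expn (ltn_ord c) (prim_expr_order gam_prim) alpha_neq0 alpha_w.
Qed.
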